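(* Let $d\ge1$, let $\mathcal{H}_R,\mathcal{H}_A,\mathcal{H}_B$ all be copies of $\mathbb{C}^d$ with standard basis $\{|j\rangle\}_{j=0}^{d-1}$, and let $\mathcal{N}:\mathcal{L}(\mathcal{H}_A)\to\mathcal{L}(\mathcal{H}_B)$ be a quantum channel (completely positive trace-preserving map). Let $\{K_i\}$ be a standard Kraus decomposition of $\mathcal{N}$ (defined in the context), so that $\mathrm{Tr}(K_0^\dagger K_0)\ge \mathrm{Tr}(K_i^\dagger K_i)$ for all $i$. Define $$\mathcal{O}(\mathcal{N}):=\max\Big\{\langle\phi|_{RB}\,(\mathcal{I}_R\otimes\mathcal{N})(\rho_{RA})\,|\phi\rangle_{RB}\;:\;\rho_{RA}\succeq0,\ \mathrm{Tr}\rho_{RA}=1\Big\},$$ where $|\phi\rangle_{RB}=\frac1{\sqrt d}\sum_j|j\rangle_R|j\rangle_B$ and $\mathcal{I}_R$ is the identity map on $\mathcal{L}(\mathcal{H}_R)$. Then $$\mathcal{O}(\mathcal{N})=\frac1d\,\mathrm{Tr}(K_0^\dagger K_0)=\frac1d\,\|J^{\mathcal{N}}_{RB}\|,$$ where $\|\cdot\|$ is the operator (spectral) norm, and the maximum is attained precisely by the density operators $\Lambda_{RA}$ whose support lies in the span of $\{|K_i^\dagger\rangle_{RA}: \mathrm{Tr}(K_i^\dagger K_i)=\mathrm{Tr}(K_0^\dagger K_0)\}$.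
   Context: Choi–Jamiołkowski operator: $J^{\mathcal{N}}_{RB}=\sum_{i,j}|i\rangle\langle j|_R\otimes\mathcal{N}(|i\rangle\langle j|)$. Operator–ket duality: for a linear operator $K$ on $\mathbb{C}^d$, $|K\rangle:=\sum_j |j\rangle\otimes K|j\rangle$; in particular $|K^\dagger\rangle_{RA}:=\sum_j|j\rangle_R\otimes K^\dagger|j\rangle_A$. Standard Kraus decomposition: take an eigendecomposition $J^{\mathcal{N}}_{RB}=\sum_i e_i|L_i\rangle\langle L_i|$ with $e_0\ge e_1\ge\dots\ge0$ and $\{|L_i\rangle\}$ orthonormal, let $L_i$ be the operator with $|L_i\rangle=\sum_j|j\rangle\otimes L_i|j\rangle$, and set $K_i=\sqrt{e_i}L_i$; then $\mathcal{N}(O)=\sum_iK_iOK_i^\dagger$, $\mathrm{Tr}(K_i^\dagger K_j)=0$ for $i\neq j$ and $\mathrm{Tr}(K_i^\dagger K_i)=e_i$. *)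

From HB Require Import structures.
From mathcomp Require Import all_boot all_order all_algebra.
From mathcomp Require Import reals.
From mathcomp.real_closed Require Export complex mxtens.

Set Implicit Arguments.
Unset Strict Implicit.
Unset Printing Implicit Defensive.

Import Order.TTheory GRing.Theory Num.Theory.
Local Open Scope ring_scope.

Section QDefs.
Variable C : numClosedFieldType.

Definition dag {m n} (A : 'M[C]_(m, n)) : 'M[C]_(n, m) := (map_mx Num.conj A)^T.

Definition psd {n} (A : 'M[C]_n) : Prop :=
  dag A = A /\ forall v : 'cV[C]_n, 0 <= (dag v *m A *m v) 0 0.

Definition density {n} (rho : 'M[C]_n) : Prop := psd rho /\ \tr rho = 1.

(* The composite space H_X (x) H_Y = C^m (x) C^n is C^(m*n) with basis
   |i>|j> = e_(mxtens_index (i, j)) (first factor = most significant). *)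

Definition blockR {k d} (X : 'M[C]_(k * d)) (i j : 'I_k) : 'M[C]_d :=
  \matrix_(a, b) X (mxtens_index (i, a)) (mxtens_index (j, b)).

(* (I_R (x) N)(X) = sum_{i,j} |i><j| (x) N(<i| X |j>) *)
Definition idR_tens {k d} (N : 'M[C]_d -> 'M[C]_d) (X : 'M[C]_(k * d))
  : 'M[C]_(k * d) :=
  \sum_(i < k) \sum_(j < k) (delta_mx i j *t N (blockR X i j)).

Definition completely_positive {d} (N : 'M[C]_d -> 'M[C]_d) : Prop :=
  forall (k : nat) (X : 'M[C]_(k * d)), psd X -> psd (idR_tens N X).

Definition trace_preserving {d} (N : 'M[C]_d -> 'M[C]_d) : Prop :=
  forall X : 'M[C]_d, \tr (N X) = \tr X.

Definition choi {d} (N : 'M[C]_d -> 'M[C]_d) : 'M[C]_(d * d) :=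
  \sum_(i < d) \sum_(j < d) (delta_mx i j *t N (delta_mx i j)).

(* operator-ket duality |K> = sum_j |j> (x) K|j> *)
Definition opket {d} (K : 'M[C]_d) : 'cV[C]_(d * d) :=
  \col_k K (mxtens_unindex k).2 (mxtens_unindex k).1.

Definition ketop {d} (v : 'cV[C]_(d * d)) : 'M[C]_d :=
  \matrix_(b, j) v (mxtens_index (j, b)) 0.

Definition maxent (d : nat) : 'cV[C]_(d * d) :=
  (sqrtC d%:R)^-1 *: \sum_(j < d) delta_mx (mxtens_index (j, j)) 0.

Definition fid_value {d} (N : 'M[C]_d -> 'M[C]_d) (rho : 'M[C]_(d * d)) : C :=
  (dag (maxent d) *m idR_tens N rho *m maxent d) 0 0.

Definition is_O_value {d} (N : 'M[C]_d -> 'M[C]_d) (x : C) : Prop :=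
  (exists rho : 'M[C]_(d * d), density rho /\ fid_value N rho = x) /\
  (forall rho : 'M[C]_(d * d), density rho -> fid_value N rho <= x).

Definition vnorm {n} (v : 'cV[C]_n) : C := sqrtC ((dag v *m v) 0 0).

Definition is_opnorm {n} (A : 'M[C]_n) (s : C) : Prop :=
  (exists v : 'cV[C]_n, vnorm v = 1 /\ vnorm (A *m v) = s) /\
  (forall v : 'cV[C]_n, vnorm v = 1 -> vnorm (A *m v) <= s).

Definition sorted_eigendecomposition {d} (J : 'M[C]_(d * d))
  (e : 'I_(d * d) -> C) (L : 'I_(d * d) -> 'cV[C]_(d * d)) : Prop :=
  [/\ forall i j : 'I_(d * d), (dag (L i) *m L j) 0 0 = (i == j)%:R,
      J = \sum_(i < d * d) e i *: (L i *m dag (L i)),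
      forall i : 'I_(d * d), 0 <= e i &
      forall i j : 'I_(d * d), (i <= j)%N -> e j <= e i].

Definition std_kraus {d} (e : 'I_(d * d) -> C) (L : 'I_(d * d) -> 'cV[C]_(d * d))
  (i : 'I_(d * d)) : 'M[C]_d := sqrtC (e i) *: ketop (L i).

(* matrix whose row space = span{ |K_i^dagger>^T : Tr(K_i^dag K_i) = Tr(K_i0^dag K_i0) } *)
Definition top_kraus_span {d} (K : 'I_(d * d) -> 'M[C]_d) (i0 : 'I_(d * d))
  : 'M[C]_(d * d) :=
  \matrix_(i < d * d)
     (if \tr (dag (K i) *m K i) == \tr (dag (K i0) *m K i0)
      then (opket (dag (K i)))^T else 0).

(* supp(rho) = column space of rho is contained in the column span of the
   vectors of S (rows of S) *)
Definition support_in {n} (rho S : 'M[C]_n) : Prop := (rho^T <= S)%MS.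

End QDefs.

(* Let |l_i> := |L_i^†>, so that |K_i^†> = sqrt(e_i) |l_i>.  Conjugating and
   swapping the tensor factors of the orthonormal eigenbasis {|L_i>} of the
   Choi operator gives the orthonormal basis {|l_i>}, and the same swap turns
   <phi|(I ⊗ N)(rho)|phi> into (1/d) Σ_i e_i <l_i|rho|l_i>.  For a density
   operator the weights <l_i|rho|l_i> are nonnegative and sum to 1, so the
   value is an average of the eigenvalues: it is at most e_0/d, with equality
   iff rho gives no weight to the |l_i> with e_i < e_0; as rho >= 0 this means
   rho |l_i> = 0 for those i, i.e. supp rho ⊆ span{|K_i^†> : e_i = e_0}.  The
   operator norm of the positive operator J is its top eigenvalue e_0, and
   e_0 > 0 because trace preservation forces J <> 0. *)
From HB Require Import structures.
From mathcomp Require Import all_boot all_order all_algebra.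
From mathcomp Require Import reals.
From mathcomp.real_closed Require Import complex mxtens.
From mathcomp Require Import ring.

Set Implicit Arguments.
Unset Strict Implicit.
Unset Printing Implicit Defensive.
Import Order.TTheory GRing.Theory Num.Theory.
Local Open Scope ring_scope.

Section Adjoint.
Variable C : numClosedFieldType.

Lemma dagE m n (A : 'M[C]_(m, n)) i j : dag A i j = (A j i)^*.
Proof. by rewrite /dag !mxE. Qed.

Lemma dagK m n (A : 'M[C]_(m, n)) : dag (dag A) = A.
Proof. by apply/matrixP => i j; rewrite !dagE conjCK. Qed.

Lemma dag_mul m n p (A : 'M[C]_(m, n)) (B : 'M[C]_(n, p)) :
  dag (A *m B) = dag B *m dag A.
Proof.
apply/matrixP => i j; rewrite dagE !mxE rmorph_sum; apply: eq_bigr => k _.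
by rewrite !dagE rmorphM mulrC.
Qed.

Lemma dag0 m n : dag (0 : 'M[C]_(m, n)) = 0.
Proof. by apply/matrixP => i j; rewrite dagE !mxE rmorph0. Qed.

Lemma dagD m n (A B : 'M[C]_(m, n)) : dag (A + B) = dag A + dag B.
Proof. by apply/matrixP => i j; rewrite !dagE !mxE rmorphD. Qed.

Lemma dagN m n (A : 'M[C]_(m, n)) : dag (- A) = - dag A.
Proof. by apply/matrixP => i j; rewrite !dagE !mxE rmorphN. Qed.

Lemma dagZ m n (c : C) (A : 'M[C]_(m, n)) : dag (c *: A) = c^* *: dag A.
Proof. by apply/matrixP => i j; rewrite !dagE !mxE rmorphM. Qed.

Lemma dag_sum m n (I : finType) (F : I -> 'M[C]_(m, n)) :
  dag (\sum_i F i) = \sum_i dag (F i).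
Proof.
apply/matrixP => i j; rewrite dagE !summxE rmorph_sum.
by apply: eq_bigr => k _; rewrite dagE.
Qed.

Lemma inner_sumE n (u v : 'cV[C]_n) : (dag u *m v) 0 0 = \sum_x (u x 0)^* * v x 0.
Proof. by rewrite mxE; apply: eq_bigr => x _; rewrite dagE. Qed.

Lemma inner_ge0 n (u : 'cV[C]_n) : 0 <= (dag u *m u) 0 0.
Proof.
by rewrite inner_sumE; apply: sumr_ge0 => x _; rewrite mulrC mul_conjC_ge0.
Qed.

Lemma inner_eq0 n (u : 'cV[C]_n) : (dag u *m u) 0 0 = 0 -> u = 0.
Proof.
rewrite inner_sumE => u0; apply/matrixP => x j; rewrite (ord1 j) mxE.
have ge0 i : true -> 0 <= (u i 0)^* * u i 0 by rewrite mulrC mul_conjC_ge0.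
have /eqP := psumr_eq0P ge0 u0 (i := x) isT.
by rewrite mulrC mul_conjC_eq0 => /eqP.
Qed.

Lemma quad_sumE n (v : 'cV[C]_n) (A : 'M[C]_n) :
  (dag v *m A *m v) 0 0 = \sum_x \sum_y (v x 0)^* * A x y * v y 0.
Proof.
rewrite mxE exchange_big /=; apply: eq_bigr => y _.
by rewrite mxE mulr_suml; apply: eq_bigr => x _; rewrite dagE.
Qed.

Lemma quad_trace n (v : 'cV[C]_n) (A : 'M[C]_n) :
  (dag v *m A *m v) 0 0 = \tr (A *m (v *m dag v)).
Proof. by rewrite -trace_mx11 mxtrace_mulC [RHS]mxtrace_mulC mulmxA. Qed.

Lemma quad_suml n (I : finType) (c : I -> C) (A : I -> 'M[C]_n) (v : 'cV[C]_n) :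
  (dag v *m (\sum_i c i *: A i) *m v) 0 0 = \sum_i c i * (dag v *m A i *m v) 0 0.
Proof.
rewrite mulmx_sumr mulmx_suml summxE; apply: eq_bigr => i _.
by rewrite -scalemxAr -scalemxAl mxE.
Qed.

Lemma quad_rank1 n (u v : 'cV[C]_n) :
  (dag v *m (u *m dag u) *m v) 0 0 = ((dag u *m v) 0 0)^* * (dag u *m v) 0 0.
Proof.
rewrite !mulmxA -(mulmxA _ (dag u)) mxE big_ord1; congr (_ * _).
by rewrite -dagE dag_mul dagK.
Qed.

Lemma quad_rank1_ge0 n (u v : 'cV[C]_n) : 0 <= (dag v *m (u *m dag u) *m v) 0 0.
Proof. by rewrite quad_rank1 mulrC mul_conjC_ge0. Qed.

Lemma density_rank1 n (u : 'cV[C]_n) : (dag u *m u) 0 0 = 1 ->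
  density (u *m dag u).
Proof.
move=> u1; split; last by rewrite mxtrace_mulC trace_mx11.
by split=> [|v]; [rewrite dag_mul dagK | exact: quad_rank1_ge0].
Qed.

Lemma psd_quad_eq0 n (A : 'M[C]_n) (v : 'cV[C]_n) :
  psd A -> (dag v *m A *m v) 0 0 = 0 -> A *m v = 0.
Proof.
move=> [hermA posA] v0; set w := A *m v.
have [|c_neq0] := eqVneq ((dag w *m w) 0 0) 0; first exact: inner_eq0.
set c := (dag w *m w) 0 0 in c_neq0 *; set a := (dag w *m A *m w) 0 0.
have c_gt0 : 0 < c by rewrite lt_def c_neq0 inner_ge0.
set lam := (a + 1) / (c *+ 2).
have lam_ge0 : 0 <= lam.
  by apply: divr_ge0; [exact: addr_ge0 (posA w) ler01 | exact: mulrn_wge0 (ltW c_gt0)].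
have wAv : dag w *m A *m v = dag w *m w by rewrite /w dag_mul hermA -!mulmxA.
have vAw : dag v *m A *m w = dag w *m w by rewrite /w dag_mul hermA !mulmxA.
(* as <v|A|v> = 0, the form at w - lam v equals a - 2 lam c = -1 *)
have := posA (w - lam *: v).
rewrite dagD dagN dagZ (geC0_conj lam_ge0) !mulmxDl !mulmxDr !mulNmx !mulmxN.
rewrite -!scalemxAl -!scalemxAr wAv vAw [dag w *m w]mx11_scalar.
rewrite [dag w *m A *m w]mx11_scalar [dag v *m A *m v]mx11_scalar v0 -/c -/a.
rewrite !mxE !eqxx !mulr1n.
have -> : a - lam * c + (- (lam * c) - - (lam * (lam * 0))) = - (1 : C).
  by rewrite /lam; field.
by rewrite oppr_ge0 ler10.
Qed.

End Adjoint.

Section Orthonormal.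
Variables (C : numClosedFieldType) (n : nat).

Definition orthonormal (u : 'I_n -> 'cV[C]_n) :=
  forall i j, (dag (u i) *m u j) 0 0 = (i == j)%:R.

Variables (u : 'I_n -> 'cV[C]_n).
Hypothesis u_on : orthonormal u.

Lemma orthonormal_mul i j : dag (u i) *m u j = ((i == j)%:R)%:M.
Proof. by rewrite [LHS]mx11_scalar u_on. Qed.

Lemma orthonormal_resolution : \sum_i u i *m dag (u i) = 1%:M.
Proof.
pose U := \matrix_(x, i) u i x 0.
have UU : dag U *m U = 1%:M.
  apply/matrixP => i j; rewrite !mxE -u_on inner_sumE.
  by apply: eq_bigr => x _; rewrite dagE !mxE.
rewrite -(mulmx1C UU); apply/matrixP => x y; rewrite summxE mxE.
by apply: eq_bigr => i _; rewrite !dagE !mxE big_ord1 !dagE.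
Qed.

Lemma orthonormal_quad_sum (A : 'M[C]_n) :
  \sum_i (dag (u i) *m A *m u i) 0 0 = \tr A.
Proof.
under eq_bigr do rewrite quad_trace.
by rewrite -raddf_sum /= -mulmx_sumr orthonormal_resolution mulmx1.
Qed.

Lemma spectral_mul (f g : 'I_n -> C) :
  (\sum_i f i *: (u i *m dag (u i))) *m (\sum_j g j *: (u j *m dag (u j)))
  = \sum_i (f i * g i) *: (u i *m dag (u i)).
Proof.
rewrite mulmx_suml; apply: eq_bigr => i _.
rewrite mulmx_sumr (bigD1 i) //= [X in _ + X]big1 => [|j ne_ji].
  rewrite addr0 -scalemxAl -scalemxAr scalerA !mulmxA -(mulmxA (u i)).
  by rewrite orthonormal_mul eqxx mul_mx_scalar scale1r.
rewrite -scalemxAl -scalemxAr !mulmxA -(mulmxA (u i)) orthonormal_mul.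
by rewrite eq_sym (negbTE ne_ji) mul_mx_scalar scale0r mul0mx !scaler0.
Qed.

End Orthonormal.

Section Tensor.
Variable C : numClosedFieldType.

Lemma sum_tens_index m n (F : 'I_(m * n) -> C) :
  \sum_x F x = \sum_(i < m) \sum_(j < n) F (mxtens_index (i, j)).
Proof.
rewrite pair_big /= (reindex (@mxtens_index m n)) /=.
  by apply: eq_bigr => -[i j].
by exists (@mxtens_unindex m n) => x _; [exact: mxtens_indexK | exact: mxtens_unindexK].
Qed.

Lemma tens_delta_sumE k n (M : 'I_k -> 'I_k -> 'M[C]_n) a x c y :
  (\sum_(i < k) \sum_(j < k) (delta_mx i j *t M i j))
     (mxtens_index (a, x)) (mxtens_index (c, y)) = M a c x y.
Proof.
rewrite summxE (bigD1 a) //= [X in _ + X]big1 => [|i ne_ia].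
  rewrite addr0 summxE (bigD1 c) //= [X in _ + X]big1 => [|j ne_jc].
    by rewrite addr0 tensmxE mxE !eqxx mul1r.
  by rewrite tensmxE mxE eqxx eq_sym (negbTE ne_jc) mul0r.
rewrite summxE big1 // => j _.
by rewrite tensmxE mxE eq_sym (negbTE ne_ia) mul0r.
Qed.

Lemma choiE d (N : 'M[C]_d -> 'M[C]_d) a x c y :
  choi N (mxtens_index (a, x)) (mxtens_index (c, y)) = N (delta_mx a c) x y.
Proof. exact: tens_delta_sumE. Qed.

Lemma idR_tensE k d (N : 'M[C]_d -> 'M[C]_d) (X : 'M[C]_(k * d)) a x c y :
  idR_tens N X (mxtens_index (a, x)) (mxtens_index (c, y)) = N (blockR X a c) x y.
Proof. exact: tens_delta_sumE. Qed.

Lemma linear_mxE d (N : {linear 'M[C]_d -> 'M[C]_d}) (X : 'M[C]_d) x y :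
  N X x y = \sum_a \sum_c X a c * N (delta_mx a c) x y.
Proof.
rewrite {1}(matrix_sum_delta X) linear_sum summxE; apply: eq_bigr => a _.
by rewrite linear_sum summxE; apply: eq_bigr => c _; rewrite linearZ mxE.
Qed.

Lemma maxentE d a b :
  maxent C d (mxtens_index (a, b)) 0 = (sqrtC (d%:R : C))^-1 * (a == b)%:R.
Proof.
rewrite /maxent mxE summxE; congr (_ * _).
rewrite (bigD1 a) //= big1 => [|j ne_ja]; rewrite mxE eqxx andbT.
  rewrite (inj_eq (can_inj (@mxtens_indexK d d))) xpair_eqE.
  by rewrite eqxx eq_sym addr0.
rewrite (inj_eq (can_inj (@mxtens_indexK d d))) xpair_eqE.
by rewrite eq_sym (negbTE ne_ja).
Qed.

Lemma maxent_quadE d (Y : 'M[C]_(d * d)) :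
  (dag (maxent C d) *m Y *m maxent C d) 0 0
  = (d%:R)^-1 * \sum_(j < d) \sum_(k < d) Y (mxtens_index (j, j)) (mxtens_index (k, k)).
Proof.
set s := sqrtC (d%:R : C).
have s_ge0 : 0 <= s^-1 by rewrite invr_ge0 sqrtC_ge0 ler0n.
have ss : s^-1 * s^-1 = (d%:R)^-1 by rewrite -invfM -expr2 sqrtCK.
rewrite -ss mulr_sumr quad_sumE sum_tens_index; apply: eq_bigr => j _.
rewrite (bigD1 j) //= [X in _ + X]big1 => [|a ne_aj]; last first.
  by rewrite big1 // => y _; rewrite maxentE eq_sym (negbTE ne_aj) mulr0 conjC0 !mul0r.
rewrite addr0 sum_tens_index mulr_sumr; apply: eq_bigr => k _.
rewrite (bigD1 k) //= [X in _ + X]big1 => [|c ne_ck]; last first.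
  by rewrite [maxent _ _ (mxtens_index (k, c)) 0]maxentE (eq_sym k c) (negbTE ne_ck) !mulr0.
by rewrite addr0 !maxentE !eqxx !mulr1 (geC0_conj s_ge0) mulrAC mulrC.
Qed.

Definition tens_swap d (x : 'I_(d * d)) : 'I_(d * d) :=
  mxtens_index ((mxtens_unindex x).2, (mxtens_unindex x).1).

Lemma tens_swapE d (a b : 'I_d) :
  tens_swap (mxtens_index (a, b)) = mxtens_index (b, a).
Proof. by rewrite /tens_swap mxtens_indexK. Qed.

Lemma tens_swapK d : involutive (@tens_swap d).
Proof. by move=> x; case: (mxtens_indexP x) => a b; rewrite !tens_swapE. Qed.

Lemma tr_dag_ketop d (v : 'cV[C]_(d * d)) : \tr (dag (ketop v) *m ketop v) = (dag v *m v) 0 0.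
Proof.
rewrite inner_sumE sum_tens_index; apply: eq_bigr => j _.
by rewrite mxE; apply: eq_bigr => b _; rewrite dagE !mxE.
Qed.

End Tensor.

Section StandardKraus.
Variables (C : numClosedFieldType) (d : nat) (N : {linear 'M[C]_d -> 'M[C]_d}).
Variables (e : 'I_(d * d) -> C) (L : 'I_(d * d) -> 'cV[C]_(d * d)).
Variable i0 : 'I_(d * d).
Hypothesis J_eig : sorted_eigendecomposition (choi N) e L.
Hypothesis i0_eq0 : nat_of_ord i0 = 0%N.
Hypothesis d_gt0 : (0 < d)%N.
Hypothesis N_tp : trace_preserving N.

Lemma eigvec_orthonormal : orthonormal L. Proof. by case: J_eig. Qed.

Lemma choi_spectral : choi N = \sum_i e i *: (L i *m dag (L i)).
Proof. by case: J_eig. Qed.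

Lemma eig_ge0 i : 0 <= e i. Proof. by case: J_eig. Qed.

Lemma eig_le_top i : e i <= e i0.
Proof. by case: J_eig => _ _ _; apply; rewrite i0_eq0. Qed.

Lemma choi_entry p q : choi N p q = \sum_i e i * (L i p 0 * (L i q 0)^*).
Proof.
rewrite choi_spectral summxE; apply: eq_bigr => i _.
by rewrite mxE mxE big_ord1 dagE.
Qed.

Lemma choi_eigvec i : choi N *m L i = e i *: L i.
Proof.
rewrite choi_spectral mulmx_suml (bigD1 i) //= [X in _ + X]big1 => [|j ne_ji].
  by rewrite addr0 -scalemxAl -mulmxA (orthonormal_mul eigvec_orthonormal) eqxx mulmx1.
rewrite -scalemxAl -mulmxA (orthonormal_mul eigvec_orthonormal) (negbTE ne_ji).
by rewrite mul_mx_scalar scale0r scaler0.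
Qed.

Definition adj_ket i : 'cV[C]_(d * d) := opket (dag (ketop (L i))).

Lemma adj_ketE i x : adj_ket i x 0 = (L i (tens_swap x) 0)^*.
Proof.
by case: (mxtens_indexP x) => a b; rewrite tens_swapE !mxE mxtens_indexK.
Qed.

Lemma adj_ket_orthonormal : orthonormal adj_ket.
Proof.
move=> i j; rewrite -[(i == j)%:R]conjC_nat -eigvec_orthonormal !inner_sumE.
rewrite rmorph_sum (reindex_inj (inv_inj (@tens_swapK d))) /=.
by apply: eq_bigr => x _; rewrite !adj_ketE tens_swapK rmorphM /= conjCK.
Qed.

Lemma opket_dag_std_kraus i : opket (dag (std_kraus e L i)) = sqrtC (e i) *: adj_ket i.
Proof.
rewrite /std_kraus dagZ geC0_conj ?sqrtC_ge0 ?eig_ge0 //.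
by apply/matrixP => x j; rewrite !mxE.
Qed.

Lemma tr_std_kraus i : \tr (dag (std_kraus e L i) *m std_kraus e L i) = e i.
Proof.
rewrite /std_kraus dagZ -scalemxAl -scalemxAr !mxtraceZ tr_dag_ketop.
by rewrite eigvec_orthonormal eqxx mulr1 geC0_conj ?sqrtC_ge0 ?eig_ge0 // -expr2 sqrtCK.
Qed.

Local Notation weight rho i := ((dag (adj_ket i) *m rho *m adj_ket i) 0 0).

Lemma fid_value_spectral rho :
  fid_value N rho = (d%:R)^-1 * \sum_i e i * weight rho i.
Proof.
rewrite /fid_value maxent_quadE; congr (_ * _).
transitivity (\sum_x \sum_y rho x y * choi N (tens_swap x) (tens_swap y)).
  rewrite [RHS]sum_tens_index; apply: eq_bigr => j _.
  under eq_bigr do rewrite idR_tensE linear_mxE.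
  rewrite exchange_big /=; apply: eq_bigr => a _.
  rewrite sum_tens_index; apply: eq_bigr => k _; apply: eq_bigr => c _.
  by rewrite mxE !tens_swapE choiE.
under [RHS]eq_bigr do rewrite quad_sumE mulr_sumr.
rewrite [RHS]exchange_big /=; apply: eq_bigr => x _.
under [RHS]eq_bigr do rewrite mulr_sumr.
rewrite [RHS]exchange_big /=; apply: eq_bigr => y _.
rewrite choi_entry mulr_sumr; apply: eq_bigr => i _.
rewrite !adj_ketE conjCK; ring.
Qed.

Lemma weight_ge0 rho i : density rho -> 0 <= weight rho i.
Proof. by case=> -[_ rho_pos] _; exact: rho_pos. Qed.

Lemma weight_sum rho : density rho -> \sum_i weight rho i = 1.
Proof. by case=> _ tr1; rewrite (orthonormal_quad_sum adj_ket_orthonormal). Qed.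

Lemma fid_value_le rho : density rho -> fid_value N rho <= (d%:R)^-1 * e i0.
Proof.
move=> rho_dens; rewrite fid_value_spectral ler_wpM2l ?invr_ge0 ?ler0n //.
rewrite -[e i0]mulr1 -(weight_sum rho_dens) mulr_sumr.
by apply: ler_sum => i _; rewrite ler_wpM2r ?weight_ge0 ?eig_le_top.
Qed.

Lemma fid_value_top : fid_value N (adj_ket i0 *m dag (adj_ket i0)) = (d%:R)^-1 * e i0.
Proof.
rewrite fid_value_spectral; congr (_ * _).
rewrite (bigD1 i0) //= quad_rank1 adj_ket_orthonormal eqxx conjC1 !mulr1.
rewrite big1 ?addr0 // => i ne_ii0.
by rewrite quad_rank1 adj_ket_orthonormal eq_sym (negbTE ne_ii0) !mulr0.
Qed.

Lemma choi_opnorm : is_opnorm (choi N) (e i0).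
Proof.
have L_on := eigvec_orthonormal; have e0_ge0 := eig_ge0 i0.
split=> [|v]; rewrite /vnorm.
  exists (L i0); rewrite L_on eqxx sqrtC1; split=> //.
  rewrite choi_eigvec dagZ -scalemxAl -scalemxAr mxE mxE L_on eqxx mulr1.
  by rewrite geC0_conj // -expr2 sqrCK.
move=> v1; have {}v1 : (dag v *m v) 0 0 = 1.
  by rewrite -[LHS]sqrtCK v1 expr1n.
have J_herm : dag (choi N) = choi N.
  rewrite choi_spectral dag_sum; apply: eq_bigr => i _.
  by rewrite dagZ dag_mul dagK geC0_conj ?eig_ge0.
rewrite -(sqrCK e0_ge0) ler_sqrtC ?nnegrE ?inner_ge0 ?exprn_ge0 //.
rewrite dag_mul J_herm mulmxA -(mulmxA (dag v)) choi_spectral spectral_mul //.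
rewrite quad_suml.
apply: le_trans (_ : \sum_i e i0 ^+ 2 * (dag v *m (L i *m dag (L i)) *m v) 0 0 <= _).
  apply: ler_sum => i _; rewrite ler_wpM2r ?quad_rank1_ge0 // expr2.
  by apply: ler_pM; rewrite ?eig_ge0 ?eig_le_top.
rewrite -quad_suml -scaler_sumr orthonormal_resolution //.
by rewrite -scalemxAr -scalemxAl mulmx1 mxE v1 mulr1.
Qed.

Lemma fid_value_eq_top rho : density rho ->
  fid_value N rho = (d%:R)^-1 * e i0 <-> forall i, e i != e i0 -> weight rho i = 0.
Proof.
move=> rho_dens.
have d_neq0 : (d%:R : C)^-1 != 0 by rewrite invr_eq0 pnatr_eq0 -lt0n.
have gap_sum : \sum_i (e i0 - e i) * weight rho i
               = e i0 - \sum_i e i * weight rho i.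
  under eq_bigr do rewrite mulrBl.
  by rewrite sumrB -mulr_sumr weight_sum // mulr1.
rewrite fid_value_spectral; split => [/(mulfI d_neq0) top i ne_top | top].
  have gap_ge0 j : true -> 0 <= (e i0 - e j) * weight rho j.
    by rewrite mulr_ge0 ?weight_ge0 // subr_ge0 eig_le_top.
  have gap0 : \sum_j (e i0 - e j) * weight rho j = 0 by rewrite gap_sum -top subrr.
  have /eqP := psumr_eq0P gap_ge0 gap0 (i := i) isT.
  by rewrite mulf_eq0 subr_eq0 eq_sym (negbTE ne_top) => /eqP.
congr (_ * _); apply/eqP; rewrite eq_sym -subr_eq0 -gap_sum.
apply/eqP/big1 => i _; have [->|ne_top] := eqVneq (e i) (e i0).
  by rewrite subrr mul0r.
by rewrite top // mulr0.
Qed.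

Lemma top_kraus_spanE i x : top_kraus_span (std_kraus e L) i0 i x
  = (if e i == e i0 then sqrtC (e i) * adj_ket i x 0 else 0).
Proof.
rewrite mxE !tr_std_kraus; case: ifP => _; last by rewrite mxE.
by rewrite mxE opket_dag_std_kraus mxE.
Qed.

Lemma top_eig_gt0 : 0 < e i0.
Proof.
rewrite lt_def eig_ge0 andbT; apply/negP => /eqP e0_eq0.
have J0 : choi N = 0.
  rewrite choi_spectral big1 // => i _.
  suff -> : e i = 0 by rewrite scale0r.
  by apply: le_anti; rewrite eig_ge0 -e0_eq0 eig_le_top.
have /eqP := N_tp 1%:M.
suff -> : N 1%:M = 0 by rewrite mxtrace0 mxtrace1 eq_sym pnatr_eq0 gtn_eqF.
apply/matrixP => x y; rewrite linear_mxE mxE big1 // => a _.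
by rewrite big1 // => c _; rewrite -choiE J0 !mxE mulr0.
Qed.

Lemma adj_ket_sub_top_span i : e i = e i0 ->
  ((adj_ket i)^T <= top_kraus_span (std_kraus e L) i0)%MS.
Proof.
move=> top; set S := top_kraus_span _ _.
have sqrt_neq0 : sqrtC (e i0) != 0 by rewrite sqrtC_eq0 gt_eqF ?top_eig_gt0.
have rowS : row i S = sqrtC (e i0) *: (adj_ket i)^T.
  by apply/matrixP => r x; rewrite (ord1 r) [LHS]mxE top_kraus_spanE top eqxx !mxE.
have -> : (adj_ket i)^T = (sqrtC (e i0))^-1 *: row i S.
  by rewrite rowS scalerA mulVf ?scale1r.
by rewrite scalemx_sub ?row_sub.
Qed.

Lemma adj_ket_orth_top_span i : e i != e i0 ->
  dag (adj_ket i) *m (top_kraus_span (std_kraus e L) i0)^T = 0.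
Proof.
move=> ne_top; apply/matrixP => r k; rewrite (ord1 r) [RHS]mxE mxE.
under eq_bigr do rewrite dagE [_^T _ _]mxE top_kraus_spanE.
have [top|_] := eqVneq (e k) (e i0); last by rewrite big1 // => x _; rewrite mulr0.
under eq_bigr do rewrite mulrCA.
rewrite -mulr_sumr -inner_sumE adj_ket_orthonormal.
suff /negbTE -> : i != k by rewrite mulr0.
by apply: contra ne_top => /eqP ->; rewrite top.
Qed.

Lemma support_in_top_span rho : density rho ->
  (forall i, e i != e i0 -> weight rho i = 0) <->
  support_in rho (top_kraus_span (std_kraus e L) i0).
Proof.
move=> rho_dens; have [[rho_herm _] _] := rho_dens.
split => [top | /submxP [X rhoX] i ne_top]; last first.
  by rewrite -[rho]trmxK rhoX trmx_mul mulmxA adj_ket_orth_top_span // !mul0mx mxE.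
have rhoE : rho = \sum_i adj_ket i *m (dag (adj_ket i) *m rho).
  rewrite -[LHS]mul1mx -(orthonormal_resolution adj_ket_orthonormal) mulmx_suml.
  by apply: eq_bigr => i _; rewrite mulmxA.
rewrite /support_in rhoE linear_sum /=; apply: summx_sub => i _.
rewrite trmx_mul; have [e_top|ne_top] := eqVneq (e i) (e i0).
  by apply: submx_trans (submxMl _ _) (adj_ket_sub_top_span e_top).
have rho_l0 := psd_quad_eq0 rho_dens.1 (top i ne_top).
by rewrite -rho_herm -dag_mul rho_l0 dag0 trmx0 mul0mx sub0mx.
Qed.

End StandardKraus.

Unset Implicit Arguments.
Set Strict Implicit.

Theorem theorem1 (R : realType) (d : nat) (hd : (0 < d)%N)
  (N : {linear 'M[R[i]]_d -> 'M[R[i]]_d})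
  (hCP : completely_positive N) (hTP : trace_preserving N)
  (e : 'I_(d * d) -> R[i]) (L : 'I_(d * d) -> 'cV[R[i]]_(d * d))
  (hJ : sorted_eigendecomposition (choi N) e L)
  (i0 : 'I_(d * d)) (hi0 : nat_of_ord i0 = 0%N) :
  let K := std_kraus e L in
  let O := (d%:R)^-1 * \tr (dag (K i0) *m K i0) in
  [/\ is_O_value N O,
      is_opnorm (choi N) (d%:R * O) &
      forall rho : 'M[R[i]]_(d * d), density rho ->
        (fid_value N rho = O <-> support_in rho (top_kraus_span K i0))].
Proof.
move=> K O; have -> : O = (d%:R)^-1 * e i0 by rewrite /O /K (tr_std_kraus hJ).
split.
- split; last by move=> rho rho_dens; exact: (fid_value_le hJ hi0 rho_dens).
  exists (adj_ket L i0 *m dag (adj_ket L i0)); split; last exact: fid_value_top hJ.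
  by apply: density_rank1; rewrite (adj_ket_orthonormal hJ) eqxx.
- by rewrite mulrA mulfV ?mul1r ?pnatr_eq0 ?gtn_eqF //; apply: choi_opnorm hJ hi0.
move=> rho rho_dens; apply: iff_trans (fid_value_eq_top hJ hi0 hd rho_dens) _.
exact: (support_in_top_span hJ hi0 hd hTP rho_dens).
Qed.
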